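(* The set consisting of the three identities $(xy)(zt)=(xz)(yt)$, $(xy)(zt)=(ty)(zx)$ and $(xy^2)y^2=x$ is a basis for $\Sigma_{2,3,4}$.
   Context: $y^2$ denotes $yy$. $\Sigma_{2,3,4}$ is the set of groupoid identities satisfied in the integers $\mathbb{Z}$ by each of the binary operations $x-y$, $-x+y$ and $-x-y$. A basis is a set of identities whose equational consequences are exactly $\Sigma_{2,3,4}$. *)

From Stdlib Require Import ZArith List.
Import ListNotations.

Inductive term : Type :=
| Var : nat -> term
| Op : term -> term -> term.

Definition identity := (term * term)%type.

Fixpoint eval {T : Type} (op : T -> T -> T) (v : nat -> T) (s : term) : T :=
  match s with
  | Var n => v n
  | Op a b => op (eval op v a) (eval op v b)
  end.

Fixpoint subst (sg : nat -> term) (s : term) : term :=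
  match s with
  | Var n => sg n
  | Op a b => Op (subst sg a) (subst sg b)
  end.

Inductive derivable (E : list identity) : term -> term -> Prop :=
| d_ax : forall s t sg, In (s, t) E -> derivable E (subst sg s) (subst sg t)
| d_refl : forall s, derivable E s s
| d_sym : forall s t, derivable E s t -> derivable E t s
| d_trans : forall s t u, derivable E s t -> derivable E t u -> derivable E s u
| d_cong : forall s1 t1 s2 t2, derivable E s1 t1 -> derivable E s2 t2 ->
    derivable E (Op s1 s2) (Op t1 t2).

Definition op2 (x y : Z) : Z := (x - y)%Z.
Definition op3 (x y : Z) : Z := (- x + y)%Z.
Definition op4 (x y : Z) : Z := (- x - y)%Z.

Definition satisfied_Z (op : Z -> Z -> Z) (s t : term) : Prop :=
  forall v : nat -> Z, eval op v s = eval op v t.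

Definition Sigma234 (s t : term) : Prop :=
  satisfied_Z op2 s t /\ satisfied_Z op3 s t /\ satisfied_Z op4 s t.

Definition vx := Var 0.
Definition vy := Var 1.
Definition vz := Var 2.
Definition vt := Var 3.
Definition sq (s : term) : term := Op s s.

Definition basis_234 : list identity :=
  [ (Op (Op vx vy) (Op vz vt), Op (Op vx vz) (Op vy vt));
    (Op (Op vx vy) (Op vz vt), Op (Op vt vy) (Op vz vx));
    (Op (Op vx (sq vy)) (sq vy), vx) ].

(* The medial law (xy)(zt) = (xz)(yt) together with (xy^2)y^2 = x makes
   p(x,y,z) := (xy^2)(yz) a Mal'cev term, so with the variable x_0 as origin,
   x + y := p(x, x_0, y) is an abelian group and xy = k + a x + b y for the
   constant k := x_0 x_0 and two group endomorphisms a, b.  The paramedial law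
   and (xy^2)y^2 = x then force a^2 = b^2 = 1, ab = ba and 1 + a + b + ab = 0,
   so every term equals a normal form sum_n c_n x_n + c k with coefficients in
   Z[C2 x C2] taken modulo the norm 1 + a + b + ab.  The groupoids x-y, -x+y and
   -x-y on Z realise the three non-trivial characters (a,b) -> (+-1,+-1) of
   C2 x C2, which together determine an element of Z[C2 x C2] up to a multiple
   of the norm; hence identities of Sigma_{2,3,4} have equal normal forms. *)
From Stdlib Require Import ZArith List Lia Setoid Morphisms Permutation.
Import ListNotations.

Section EquationalLogic.

Variable E : list identity.

#[export] Instance derivable_equiv : Equivalence (derivable E).
Proof. split; red; [apply d_refl | apply d_sym | apply d_trans]. Qed.

#[export] Instance Op_derivable_proper : Proper (derivable E ==> derivable E ==> derivable E) Op.
Proof. intros s s' Hs t t' Ht; apply d_cong; assumption. Qed.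

Lemma eval_subst {T : Type} (op : T -> T -> T) (v : nat -> T) sg s :
  eval op v (subst sg s) = eval op (fun n => eval op v (sg n)) s.
Proof. induction s; simpl; congruence. Qed.

Lemma derivable_sound {T : Type} (op : T -> T -> T) :
  (forall s t, In (s, t) E -> forall v, eval op v s = eval op v t) ->
  forall s t, derivable E s t -> forall v, eval op v s = eval op v t.
Proof.
  intros HE s t H; induction H; intro v; simpl; try congruence.
  rewrite !eval_subst; auto.
Qed.

Section Medial.

Hypothesis medial :
  forall x y z w, derivable E (Op (Op x y) (Op z w)) (Op (Op x z) (Op y w)).

Lemma medial_Op_subst f s1 s2 :
  derivable E (Op (subst s1 f) (subst s2 f)) (subst (fun n => Op (s1 n) (s2 n)) f).
Proof.
  revert s1 s2; induction f as [n | f1 IH1 f2 IH2]; intros s1 s2; simpl.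
  - reflexivity.
  - rewrite medial; apply Op_derivable_proper; auto.
Qed.

Lemma medial_interchange f g (sg : nat -> nat -> term) :
  derivable E (subst (fun m => subst (sg m) f) g)
              (subst (fun n => subst (fun m => sg m n) g) f).
Proof.
  induction g as [m | g1 IH1 g2 IH2]; simpl; [reflexivity |].
  rewrite IH1, IH2; apply medial_Op_subst.
Qed.

End Medial.

End EquationalLogic.

Infix "≈" := (derivable basis_234) (at level 70).

Lemma medial x y z w : Op (Op x y) (Op z w) ≈ Op (Op x z) (Op y w).
Proof.
  exact (d_ax basis_234 _ _ (fun n => match n with 0 => x | 1 => y | 2 => z | _ => w end)
           (or_introl eq_refl)).
Qed.

Lemma paramedial x y z w : Op (Op x y) (Op z w) ≈ Op (Op w y) (Op z x).
Proof.
  exact (d_ax basis_234 _ _ (fun n => match n with 0 => x | 1 => y | 2 => z | _ => w end)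
           (or_intror (or_introl eq_refl))).
Qed.

Lemma mul_sqK x y : Op (Op x (sq y)) (sq y) ≈ x.
Proof.
  exact (d_ax basis_234 _ _ (fun n => match n with 0 => x | _ => y end)
           (or_intror (or_intror (or_introl eq_refl)))).
Qed.

(** * The Mal'cev term *)

Definition malcev x y z := Op (Op x (sq y)) (Op y z).

#[export] Instance malcev_proper : Proper (derivable basis_234 ==> derivable basis_234 ==>
  derivable basis_234 ==> derivable basis_234) malcev.
Proof. intros x x' Hx y y' Hy z z' Hz; unfold malcev, sq; rewrite Hx, Hy, Hz; reflexivity. Qed.

Definition malcev_term := malcev (Var 0) (Var 1) (Var 2).
Definition env3 {A : Type} (x y z : A) (n : nat) : A :=
  match n with 0 => x | 1 => y | _ => z end.

Lemma malcev_interchange x1 x2 x3 y1 y2 y3 z1 z2 z3 :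
  malcev (malcev x1 x2 x3) (malcev y1 y2 y3) (malcev z1 z2 z3)
  ≈ malcev (malcev x1 y1 z1) (malcev x2 y2 z2) (malcev x3 y3 z3).
Proof.
  exact (medial_interchange _ medial malcev_term malcev_term
           (env3 (env3 x1 x2 x3) (env3 y1 y2 y3) (env3 z1 z2 z3))).
Qed.

Lemma Op_malcev x1 x2 x3 y1 y2 y3 :
  Op (malcev x1 x2 x3) (malcev y1 y2 y3) ≈ malcev (Op x1 y1) (Op x2 y2) (Op x3 y3).
Proof. exact (medial_Op_subst _ medial malcev_term (env3 x1 x2 x3) (env3 y1 y2 y3)). Qed.

Lemma malcev_xyy x y : malcev x y y ≈ x.
Proof. apply mul_sqK. Qed.

Lemma malcev_yyx y x : malcev y y x ≈ x.
Proof. unfold malcev; rewrite paramedial; apply mul_sqK. Qed.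

(** * The abelian group with origin [Var 0] *)

Definition o := Var 0.
Definition add x y := malcev x o y.
Definition opp x := malcev o x o.

#[export] Instance add_proper :
  Proper (derivable basis_234 ==> derivable basis_234 ==> derivable basis_234) add.
Proof. intros x x' Hx y y' Hy; unfold add; rewrite Hx, Hy; reflexivity. Qed.

Lemma add0r x : add o x ≈ x.
Proof. apply malcev_yyx. Qed.

Lemma addr0 x : add x o ≈ x.
Proof. apply malcev_xyy. Qed.

Lemma addC x y : add x y ≈ add y x.
Proof. apply paramedial. Qed.

Lemma addACA x y z w : add (add x y) (add z w) ≈ add (add x z) (add y w).
Proof.
  unfold add.
  rewrite <- (malcev_xyy o o) at 2; rewrite malcev_interchange, (malcev_xyy o o).
  reflexivity.
Qed.

Lemma addA x y z : add (add x y) z ≈ add x (add y z).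
Proof. rewrite <- (add0r z) at 1; rewrite addACA, addr0; reflexivity. Qed.

Lemma addrN x : add x (opp x) ≈ o.
Proof.
  unfold add, opp.
  transitivity (malcev (malcev x o o) (malcev o o o) (malcev o x o)).
  { rewrite !malcev_xyy; reflexivity. }
  rewrite malcev_interchange, (malcev_xyy x o), (malcev_yyx o x), (malcev_xyy o o),
    (malcev_yyx x o).
  reflexivity.
Qed.

Lemma addIr s x y : add x s ≈ add y s -> x ≈ y.
Proof.
  intro H.
  rewrite <- (addr0 x), <- (addr0 y), <- (addrN s), <- !addA, H.
  reflexivity.
Qed.

(* Normalisation modulo associativity and commutativity of [add]: both sides
   are flattened to lists of summands, compared up to permutation. *)

Inductive sum_expr := SZero | SAtom (t : term) | SAdd (e1 e2 : sum_expr).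

Fixpoint sum_expr_term e :=
  match e with SZero => o | SAtom t => t | SAdd e1 e2 => add (sum_expr_term e1) (sum_expr_term e2) end.

Fixpoint summands e :=
  match e with SZero => [] | SAtom t => [t] | SAdd e1 e2 => summands e1 ++ summands e2 end.

Fixpoint add_list l := match l with [] => o | x :: l => add x (add_list l) end.

Lemma add_list_cat l1 l2 : add_list (l1 ++ l2) ≈ add (add_list l1) (add_list l2).
Proof.
  induction l1 as [| x l1 IH]; simpl; [symmetry; apply add0r |].
  rewrite IH; symmetry; apply addA.
Qed.

Lemma sum_expr_summands e : sum_expr_term e ≈ add_list (summands e).
Proof.
  induction e; simpl; [reflexivity | symmetry; apply addr0 |].
  rewrite IHe1, IHe2, add_list_cat; reflexivity.
Qed.

Lemma add_list_perm l1 l2 : Permutation l1 l2 -> add_list l1 ≈ add_list l2.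
Proof.
  induction 1; simpl; [reflexivity | rewrite IHPermutation; reflexivity | | etransitivity; eauto].
  rewrite <- !addA, (addC y x); reflexivity.
Qed.

Lemma sum_expr_perm e1 e2 :
  Permutation (summands e1) (summands e2) -> sum_expr_term e1 ≈ sum_expr_term e2.
Proof. intro H; rewrite !sum_expr_summands; exact (add_list_perm _ _ H). Qed.

Ltac reify_sum t :=
  lazymatch t with
  | add ?x ?y => let u := reify_sum x in let v := reify_sum y in constr:(SAdd u v)
  | o => constr:(SZero)
  | ?z => constr:(SAtom z)
  end.

Ltac perm_head :=
  lazymatch goal with
  | |- Permutation (?x :: _) (?h :: _) =>
      tryif constr_eq x h then apply Permutation_refl
      else (eapply perm_trans; [apply perm_swap | apply perm_skip; perm_head])
  end.

Ltac perm_solve :=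
  lazymatch goal with
  | |- Permutation [] [] => apply perm_nil
  | |- Permutation (?x :: ?l) ?l2 =>
      eapply perm_trans; [apply perm_skip | perm_head]; perm_solve
  end.

Ltac add_ac :=
  lazymatch goal with
  | |- ?L ≈ ?R =>
      let e1 := reify_sum L in let e2 := reify_sum R in
      change (sum_expr_term e1 ≈ sum_expr_term e2);
      apply sum_expr_perm; cbn [summands app]; perm_solve
  end.

(** * The affine representation of the product *)

Definition k := sq o.
(* In additive notation [mula x] is xo - k and [mulb x] is ox - k. *)
Definition mula x := malcev (Op x o) k o.
Definition mulb x := malcev (Op o x) k o.

#[export] Instance mula_proper : Proper (derivable basis_234 ==> derivable basis_234) mula.
Proof. intros x x' H; unfold mula; rewrite H; reflexivity. Qed.

#[export] Instance mulb_proper : Proper (derivable basis_234 ==> derivable basis_234) mulb.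
Proof. intros x x' H; unfold mulb; rewrite H; reflexivity. Qed.

Lemma Op_affine x y : Op x y ≈ add (add k (mula x)) (mulb y).
Proof.
  assert (malcev_o_cancel : forall u v, malcev v o (malcev u v o) ≈ u).
  { intros u v.
    transitivity (malcev (malcev o o v) (malcev o o o) (malcev u v o)).
    { rewrite malcev_yyx, malcev_xyy; reflexivity. }
    rewrite malcev_interchange, (malcev_yyx o u), (malcev_yyx o v), (malcev_xyy v o),
      (malcev_xyy u v).
    reflexivity. }
  assert (malcev_o_shift : forall u v w, malcev u o (malcev w v o) ≈ malcev u v w).
  { intros u v w.
    transitivity (malcev (malcev u w w) (malcev w w o) (malcev w v o)).
    { rewrite malcev_xyy, malcev_yyx; reflexivity. }
    rewrite malcev_interchange, (malcev_xyy u w), (malcev_yyx w v), (malcev_xyy w o).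
    reflexivity. }
  unfold add at 2, mula; rewrite malcev_o_cancel.
  unfold add, mulb; rewrite malcev_o_shift; unfold k, sq.
  rewrite <- Op_malcev, malcev_xyy, malcev_yyx.
  reflexivity.
Qed.

Lemma mula0 : mula o ≈ o.
Proof. apply malcev_yyx. Qed.

Lemma mulb0 : mulb o ≈ o.
Proof. apply malcev_yyx. Qed.

Lemma mulaD x y : mula (add x y) ≈ add (mula x) (mula y).
Proof.
  unfold mula at 1, add at 1.
  transitivity (malcev (malcev (Op x o) k (Op y o)) (malcev k k k) (malcev o o o)).
  { apply malcev_proper; [| symmetry; apply malcev_xyy | symmetry; apply malcev_xyy].
    unfold k, sq; rewrite <- Op_malcev, malcev_xyy; reflexivity. }
  rewrite malcev_interchange, (malcev_yyx k o); reflexivity.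
Qed.

Lemma mulbD x y : mulb (add x y) ≈ add (mulb x) (mulb y).
Proof.
  unfold mulb at 1, add at 1.
  transitivity (malcev (malcev (Op o x) k (Op o y)) (malcev k k k) (malcev o o o)).
  { apply malcev_proper; [| symmetry; apply malcev_xyy | symmetry; apply malcev_xyy].
    unfold k, sq; rewrite <- Op_malcev, malcev_xyy; reflexivity. }
  rewrite malcev_interchange, (malcev_yyx k o); reflexivity.
Qed.

Definition affine_defect := add (add k (mula k)) (add (mula (mulb k)) (mulb k)).

Lemma mulaK_defect x : add (mula (mula x)) affine_defect ≈ x.
Proof.
  pose proof (mul_sqK x o) as H; change (Op (Op x k) k ≈ x) in H.
  rewrite (Op_affine (Op x k) k), (Op_affine x k), !mulaD in H.
  etransitivity; [| exact H]; unfold affine_defect; add_ac.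
Qed.

Lemma affine_defect0 : affine_defect ≈ o.
Proof.
  pose proof (mulaK_defect o) as H; rewrite !mula0 in H.
  etransitivity; [| exact H]; add_ac.
Qed.

Lemma mulaK x : mula (mula x) ≈ x.
Proof.
  etransitivity; [| apply (mulaK_defect x)].
  rewrite affine_defect0; symmetry; apply addr0.
Qed.

Lemma mulbK x : mulb (mulb x) ≈ x.
Proof.
  pose proof (paramedial x o o o) as H; change (Op (Op x o) k ≈ Op k (Op o x)) in H.
  rewrite (Op_affine (Op x o) k), (Op_affine x o), (Op_affine k (Op o x)), (Op_affine o x) in H.
  rewrite !mulaD, !mulbD, ?mula0, ?mulb0, mulaK in H.
  symmetry; apply (addIr (add (add k (mula k)) (mulb k))).
  transitivity (add (add k (add (add (mula k) x) o)) (mulb k)); [add_ac |].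
  rewrite H; add_ac.
Qed.

Lemma mulab x : mula (mulb x) ≈ mulb (mula x).
Proof.
  pose proof (medial o x o o) as H; change (Op (Op o x) k ≈ Op k (Op x o)) in H.
  rewrite (Op_affine (Op o x) k), (Op_affine o x), (Op_affine k (Op x o)), (Op_affine x o) in H.
  rewrite !mulaD, !mulbD, ?mula0, ?mulb0 in H.
  apply (addIr (add (add k (mula k)) (mulb k))).
  etransitivity; [| etransitivity; [exact H |]]; add_ac.
Qed.

Lemma norm_vanishes y : add (add y (mula y)) (add (mulb y) (mula (mulb y))) ≈ o.
Proof.
  pose proof (mul_sqK o y) as H; unfold sq in H.
  rewrite (Op_affine (Op o (Op y y)) (Op y y)), (Op_affine o (Op y y)), (Op_affine y y) in H.
  rewrite !mulaD, !mulbD, ?mula0, ?mulb0, ?mulaK, ?mulbK, !mulaD in H.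
  rewrite (mulab (mula y)), mulaK, <- (mulab y) in H.
  transitivity (add (add (add y (mula y)) (add (mulb y) (mula (mulb y)))) affine_defect).
  { rewrite affine_defect0; symmetry; apply addr0. }
  etransitivity; [| exact H]; unfold affine_defect; add_ac.
Qed.

(** * Coefficients in the group semiring N[C2 x C2] *)

(* [GC n1 na nb nab] stands for n1 + na a + nb b + nab ab. *)
Inductive gcoef := GC (n1 na nb nab : nat).

Definition gc_add (u v : gcoef) :=
  let (a1, a2, a3, a4) := u in let (b1, b2, b3, b4) := v in
  GC (a1 + b1) (a2 + b2) (a3 + b3) (a4 + b4).
Definition gc_mula (u : gcoef) := let (n1, na, nb, nab) := u in GC na n1 nab nb.
Definition gc_mulb (u : gcoef) := let (n1, na, nb, nab) := u in GC nb nab n1 na.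
Definition gc_one := GC 1 0 0 0.
Definition gc_zero := GC 0 0 0 0.
Definition gc_norm j := GC j j j j.

Fixpoint natmul (n : nat) (y : term) : term :=
  match n with 0 => o | S n => add y (natmul n y) end.

Definition gc_scale (c : gcoef) (y : term) : term :=
  let (n1, na, nb, nab) := c in
  add (add (natmul n1 y) (natmul na (mula y))) (add (natmul nb (mulb y)) (natmul nab (mula (mulb y)))).

#[export] Instance natmul_proper n : Proper (derivable basis_234 ==> derivable basis_234) (natmul n).
Proof. intros x y H; induction n; simpl; [reflexivity | apply add_proper; assumption]. Qed.

#[export] Instance gc_scale_proper c : Proper (derivable basis_234 ==> derivable basis_234) (gc_scale c).
Proof. intros x y H; destruct c; simpl; rewrite H; reflexivity. Qed.

Lemma natmulD i j y : natmul (i + j) y ≈ add (natmul i y) (natmul j y).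
Proof. induction i; simpl; [symmetry; apply add0r | rewrite IHi; symmetry; apply addA]. Qed.

Lemma natmul0 i : natmul i o ≈ o.
Proof. induction i; simpl; [reflexivity | rewrite IHi; apply add0r]. Qed.

Lemma natmul_add i u v : natmul i (add u v) ≈ add (natmul i u) (natmul i v).
Proof. induction i; simpl; [symmetry; apply add0r | rewrite IHi; apply addACA]. Qed.

Lemma mula_natmul i z : mula (natmul i z) ≈ natmul i (mula z).
Proof. induction i; simpl; [apply mula0 | rewrite mulaD, IHi; reflexivity]. Qed.

Lemma mulb_natmul i z : mulb (natmul i z) ≈ natmul i (mulb z).
Proof. induction i; simpl; [apply mulb0 | rewrite mulbD, IHi; reflexivity]. Qed.

Lemma gc_scaleD c d y : add (gc_scale c y) (gc_scale d y) ≈ gc_scale (gc_add c d) y.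
Proof.
  destruct c, d; simpl; rewrite !natmulD.
  rewrite addACA, (addACA (natmul n1 y)), (addACA (natmul nb (mulb y))).
  reflexivity.
Qed.

Lemma mula_gc_scale c y : mula (gc_scale c y) ≈ gc_scale (gc_mula c) y.
Proof. destruct c; simpl; rewrite !mulaD, !mula_natmul, !mulaK; add_ac. Qed.

Lemma mulb_gc_scale c y : mulb (gc_scale c y) ≈ gc_scale (gc_mulb c) y.
Proof.
  destruct c; simpl.
  rewrite !mulbD, !mulb_natmul, <- (mulab (mulb y)), !mulbK, <- (mulab y); add_ac.
Qed.

Lemma gc_scale1 y : gc_scale gc_one y ≈ y.
Proof. simpl; rewrite <- (addr0 y) at 2; add_ac. Qed.

Lemma gc_scale0 y : gc_scale gc_zero y ≈ o.
Proof. simpl; add_ac. Qed.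

Lemma gc_scale_norm j y : gc_scale (gc_norm j) y ≈ o.
Proof. simpl; rewrite <- !natmul_add, norm_vanishes; apply natmul0. Qed.

Lemma gc_scale_eq_mod_norm c d i j y :
  gc_add c (gc_norm i) = gc_add d (gc_norm j) -> gc_scale c y ≈ gc_scale d y.
Proof.
  intro H.
  rewrite <- (addr0 (gc_scale c y)), <- (gc_scale_norm i y), gc_scaleD, H, <- gc_scaleD,
    gc_scale_norm.
  apply addr0.
Qed.

(** * Normal forms *)

Fixpoint coef (x : nat) (t : term) : gcoef :=
  match t with
  | Var y => if Nat.eqb y x then gc_one else gc_zero
  | Op s u => gc_add (gc_mula (coef x s)) (gc_mulb (coef x u))
  end.

Fixpoint const_coef (t : term) : gcoef :=
  match t with
  | Var _ => gc_zero
  | Op s u => gc_add (gc_add (gc_mula (const_coef s)) (gc_mulb (const_coef u))) gc_one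
  end.

Fixpoint linear_part (n : nat) (t : term) : term :=
  match n with 0 => o | S n => add (linear_part n t) (gc_scale (coef n t) (Var n)) end.

Definition normal_form n t := add (linear_part n t) (gc_scale (const_coef t) k).

Fixpoint var_bound (t : term) : nat :=
  match t with Var x => S x | Op s u => Nat.max (var_bound s) (var_bound u) end.

Lemma linear_part_Var n x : linear_part n (Var x) ≈ if Nat.ltb x n then Var x else o.
Proof.
  induction n; simpl; [reflexivity |].
  rewrite IHn; destruct (Nat.eqb_spec x n) as [-> | Hne].
  - rewrite Nat.ltb_irrefl, gc_scale1, (proj2 (Nat.ltb_lt n (S n)) (Nat.lt_succ_diag_r n)).
    apply add0r.
  - rewrite gc_scale0, addr0.
    replace (Nat.ltb x (S n)) with (Nat.ltb x n); [reflexivity |].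
    destruct (Nat.ltb_spec x n), (Nat.ltb_spec x (S n)); auto; lia.
Qed.

Lemma linear_part_Op n s u :
  add (mula (linear_part n s)) (mulb (linear_part n u)) ≈ linear_part n (Op s u).
Proof.
  induction n; simpl; [rewrite mula0, mulb0; apply addr0 |].
  rewrite mulaD, mulbD, addACA, IHn, mula_gc_scale, mulb_gc_scale, gc_scaleD.
  reflexivity.
Qed.

Lemma normal_formE t n : var_bound t <= n -> t ≈ normal_form n t.
Proof.
  induction t as [x | s IHs u IHu]; intro Hb; unfold normal_form; simpl in Hb.
  - rewrite linear_part_Var, (proj2 (Nat.ltb_lt x n) ltac:(lia)); simpl const_coef.
    rewrite gc_scale0, addr0; reflexivity.
  - rewrite (IHs ltac:(lia)), (IHu ltac:(lia)) at 1.
    rewrite Op_affine; unfold normal_form.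
    rewrite mulaD, mulbD, mula_gc_scale, mulb_gc_scale, <- linear_part_Op.
    simpl const_coef; rewrite <- !gc_scaleD, gc_scale1.
    add_ac.
Qed.

(** * Separation by the three integer groupoids *)

Open Scope Z_scope.

Definition gc_char (ca cb : Z) (c : gcoef) : Z :=
  let (n1, na, nb, nab) := c in
  Z.of_nat n1 + ca * Z.of_nat na + cb * Z.of_nat nb + ca * cb * Z.of_nat nab.

Lemma gc_eq_mod_norm c d :
  gc_char 1 (-1) c = gc_char 1 (-1) d ->
  gc_char (-1) 1 c = gc_char (-1) 1 d ->
  gc_char (-1) (-1) c = gc_char (-1) (-1) d ->
  exists i j, gc_add c (gc_norm i) = gc_add d (gc_norm j).
Proof.
  destruct c as [a1 a2 a3 a4], d as [b1 b2 b3 b4]; unfold gc_char, gc_add, gc_norm.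
  intros H1 H2 H3.
  exists b1, a1; f_equal; lia.
Qed.

Section LinearGroupoid.

Variables (ca cb : Z) (op : Z -> Z -> Z).
Hypothesis op_linear : forall x y, op x y = ca * x + cb * y.
Hypothesis ca_unit : ca = 1 \/ ca = -1.
Hypothesis cb_unit : cb = 1 \/ cb = -1.

Lemma eval_indicator x t :
  eval op (fun n => if Nat.eqb n x then 1 else 0) t = gc_char ca cb (coef x t).
Proof.
  induction t as [y | s IHs u IHu]; simpl.
  - destruct (Nat.eqb y x); destruct ca_unit as [-> | ->], cb_unit as [-> | ->]; reflexivity.
  - rewrite op_linear, IHs, IHu; destruct (coef x s), (coef x u); simpl.
    destruct ca_unit as [-> | ->], cb_unit as [-> | ->]; lia.
Qed.

Lemma eval_ones t : eval op (fun _ => 1) t - 1 = (ca + cb - 1) * gc_char ca cb (const_coef t).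
Proof.
  induction t as [y | s IHs u IHu]; simpl; [lia |].
  rewrite op_linear; destruct (const_coef s), (const_coef u); simpl in *.
  destruct ca_unit as [-> | ->], cb_unit as [-> | ->]; lia.
Qed.

Lemma satisfied_coef_char s t x :
  satisfied_Z op s t -> gc_char ca cb (coef x s) = gc_char ca cb (coef x t).
Proof. intro H; rewrite <- !eval_indicator; apply H. Qed.

Lemma satisfied_const_char s t :
  ca + cb <> 1 -> satisfied_Z op s t ->
  gc_char ca cb (const_coef s) = gc_char ca cb (const_coef t).
Proof.
  intros Hc H.
  apply (Z.mul_reg_l _ _ (ca + cb - 1)); [lia |].
  rewrite <- !eval_ones, (H (fun _ => 1)); reflexivity.
Qed.

End LinearGroupoid.

Lemma op2E x y : op2 x y = 1 * x + -1 * y. Proof. unfold op2; lia. Qed.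
Lemma op3E x y : op3 x y = -1 * x + 1 * y. Proof. unfold op3; lia. Qed.
Lemma op4E x y : op4 x y = -1 * x + -1 * y. Proof. unfold op4; lia. Qed.

Close Scope Z_scope.

Lemma Sigma234_coef s t x :
  Sigma234 s t -> exists i j, gc_add (coef x s) (gc_norm i) = gc_add (coef x t) (gc_norm j).
Proof.
  intros [H2 [H3 H4]]; apply gc_eq_mod_norm.
  - exact (satisfied_coef_char _ _ _ op2E (or_introl eq_refl) (or_intror eq_refl) _ _ _ H2).
  - exact (satisfied_coef_char _ _ _ op3E (or_intror eq_refl) (or_introl eq_refl) _ _ _ H3).
  - exact (satisfied_coef_char _ _ _ op4E (or_intror eq_refl) (or_intror eq_refl) _ _ _ H4).
Qed.

Lemma Sigma234_const_coef s t :
  Sigma234 s t -> exists i j, gc_add (const_coef s) (gc_norm i) = gc_add (const_coef t) (gc_norm j).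
Proof.
  intros [H2 [H3 H4]]; apply gc_eq_mod_norm.
  - exact (satisfied_const_char _ _ _ op2E (or_introl eq_refl) (or_intror eq_refl) _ _
             ltac:(discriminate) H2).
  - exact (satisfied_const_char _ _ _ op3E (or_intror eq_refl) (or_introl eq_refl) _ _
             ltac:(discriminate) H3).
  - exact (satisfied_const_char _ _ _ op4E (or_intror eq_refl) (or_intror eq_refl) _ _
             ltac:(discriminate) H4).
Qed.

Lemma Sigma234_normal_form n s t : Sigma234 s t -> normal_form n s ≈ normal_form n t.
Proof.
  intro H; unfold normal_form.
  assert (Hlin : linear_part n s ≈ linear_part n t).
  { induction n; simpl; [reflexivity |].
    destruct (Sigma234_coef s t n H) as [i [j Hij]].
    rewrite IHn, (gc_scale_eq_mod_norm _ _ _ _ (Var n) Hij); reflexivity. }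
  destruct (Sigma234_const_coef s t H) as [i [j Hij]].
  rewrite Hlin, (gc_scale_eq_mod_norm _ _ _ _ k Hij); reflexivity.
Qed.

Lemma basis_234_valid op :
  op = op2 \/ op = op3 \/ op = op4 ->
  forall s t, In (s, t) basis_234 -> forall v, eval op v s = eval op v t.
Proof.
  intros Hop s t Hin v; simpl in Hin.
  destruct Hin as [H | [H | [H | []]]]; inversion H; subst;
    destruct Hop as [-> | [-> | ->]]; simpl; unfold op2, op3, op4; lia.
Qed.

Lemma derivable_Sigma234 s t : s ≈ t -> Sigma234 s t.
Proof.
  intro H; split; [| split]; intro v;
    refine (derivable_sound basis_234 _ _ s t H v); apply basis_234_valid; auto.
Qed.

Theorem theorem7p2 :
  forall s t : term, derivable basis_234 s t <-> Sigma234 s t.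
Proof.
  intros s t; split; [apply derivable_Sigma234 |].
  intro H; set (n := Nat.max (var_bound s) (var_bound t)).
  rewrite (normal_formE s n), (normal_formE t n) by lia.
  apply Sigma234_normal_form; assumption.
Qed.
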